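(* Let $\mu_1,\dots,\mu_d$ be Borel probability measures on $\mathbb{R}^d$ such that there exist $p_1,\dots,p_d\in(1,+\infty)$ with $\sum_i\frac1{p_i}=1$ and $\sum_i\int\frac{|x|^{p_i}}{p_i}d\mu_i(x)<+\infty$. Assume that two of the marginals are symmetric, i.e. $(-\mathrm{id})\sharp\mu_i=\mu_i$ and $(-\mathrm{id})\sharp\mu_j=\mu_j$ for two distinct indices $i\ne j$. Let $\bar\gamma$ be any maximizer of $\int\det(x_1,\dots,x_d)\,d\gamma$ over $\gamma\in\Pi(\mu_1,\dots,\mu_d)$. Then $\det(x_1,\dots,x_d)\ge0$ for $\bar\gamma$-a.e. $(x_1,\dots,x_d)$, and $\bar\gamma$ also maximizes $\int|\det(x_1,\dots,x_d)|\,d\gamma$ over $\gamma\in\Pi(\mu_1,\dots,\mu_d)$.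
   Context: $\Pi(\mu_1,\dots,\mu_d)$ is the set of Borel probability measures on $(\mathbb{R}^d)^d$ whose $i$-th marginal is $\mu_i$ for each $i$; $\sharp$ denotes push-forward. *)

From HB Require Import structures.
From mathcomp Require Import all_boot all_order all_algebra.
From mathcomp Require Import all_classical all_reals all_analysis.
Set Implicit Arguments. Unset Strict Implicit. Unset Printing Implicit Defensive.
Import Order.TTheory GRing.Theory Num.Theory.
Local Open Scope classical_set_scope.
Local Open Scope ring_scope.

(* R^d is modelled as d.-tuple R, with the product (= Borel) sigma-algebra
   of measurable_structure.v; (R^d)^d as d.-tuple (d.-tuple R). *)

Definition enorm (R : realType) (d : nat) (x : d.-tuple R) : R :=
  Num.sqrt (\sum_(j < d) tnth x j ^+ 2).

Definition detx (R : realType) (d : nat) (x : d.-tuple (d.-tuple R)) : R :=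
  \det (\matrix_(i < d, j < d) tnth (tnth x i) j).

Definition negt (R : realType) (d : nat) (x : d.-tuple R) : d.-tuple R :=
  map_tuple (fun t => - t) x.

Definition symmetric_measure (R : realType) (d : nat)
    (mu : probability (d.-tuple R) R) : Prop :=
  forall A : set (d.-tuple R), measurable A ->
    mu (@negt R d @^-1` A) = mu A.

Definition coupling (R : realType) (d : nat)
    (mu : 'I_d -> probability (d.-tuple R) R)
    (gamma : probability (d.-tuple (d.-tuple R)) R) : Prop :=
  forall (i : 'I_d) (A : set (d.-tuple R)), measurable A ->
    gamma ((fun x : d.-tuple (d.-tuple R) => tnth x i) @^-1` A) = mu i A.

From HB Require Import structures.
From mathcomp Require Import all_boot all_order all_algebra.
From mathcomp Require Import all_classical all_reals all_analysis.
Import Order.TTheory GRing.Theory Num.Theory.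
Local Open Scope classical_set_scope.
Local Open Scope ring_scope.
From mathcomp Require Import perm measurable_realfun ring lra.
Set Implicit Arguments. Unset Strict Implicit. Unset Printing Implicit Defensive.

(* Given any coupling gamma, draw a fair sign e independently of x, multiply
   the row x_i by e and the row x_j by e times the sign of det x.  An odd number
   of rows changes sign exactly when det x < 0, so the determinant becomes
   |det x|; and the i-th and j-th marginals become the symmetrizations of mu_i
   and mu_j, which are mu_i and mu_j.  The law gamma' of the new rows is thus a
   coupling, and
     int |det| dgamma = int det dgamma' <= int det dgbar <= int |det| dgbar.
   For gamma = gbar this forces int det^- dgbar = 0, which is meaningful since
   int |det| dgbar is finite: |det x| <= d! prod_k |x_k| by the Leibniz formula,
   and prod_k |x_k| <= sum_k |x_k|^p_k / p_k by Young's inequality. *)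

Lemma halfeDD (R : realType) (x : \bar R) : (0 <= x)%E ->
  ((2^-1 : R)%:E * (x + x) = x)%E.
Proof.
case: x => [r||] //= _; first by rewrite -EFinD -EFinM; congr EFin; field.
by rewrite gt0_muley ?lte_fin ?invr_gt0.
Qed.

Section midpoint_probability.
Context d (T : measurableType d) (R : realType) (P Q : probability T R).

Definition mid_prob :=
  measure_add (mscale (2^-1 : R)%:nng P) (mscale (2^-1 : R)%:nng Q).

Lemma mid_probE A : (mid_prob A = (2^-1 : R)%:E * (P A + Q A))%E.
Proof.
by rewrite /mid_prob measure_addE /mscale /= -muleDr // ge0_adde_def // inE.
Qed.

Let mid_prob_setT : mid_prob [set: T] = 1%E.
Proof. by rewrite mid_probE !probability_setT halfeDD. Qed.

HB.instance Definition _ := Measure.on mid_prob.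
HB.instance Definition _ :=
  Measure_isProbability.Build _ _ _ mid_prob mid_prob_setT.

Lemma ge0_integral_mid_prob (f : T -> \bar R) :
  measurable_fun [set: T] f -> (forall x, 0 <= f x)%E ->
  (\int[mid_prob]_x f x = (2^-1 : R)%:E * (\int[P]_x f x + \int[Q]_x f x))%E.
Proof.
move=> mf f0; rewrite ge0_integral_measure_add // !ge0_integral_mscale //.
by rewrite -muleDr // ge0_adde_def // inE integral_ge0.
Qed.

End midpoint_probability.

Section measure_integral_facts.
Local Open Scope ereal_scope.
Context d (T : measurableType d) (R : realType).
Variable m : {measure set T -> \bar R}.

Lemma measure_select_setC (P N S : set T) :
  measurable P -> measurable N -> measurable S ->
  m ((P `\` S) `|` (N `&` S)) + m ((P `\` ~` S) `|` (N `&` ~` S)) = m P + m N.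
Proof.
move=> mP mN mS; have mCS := measurableC mS.
have disj (A B U : set T) : (A `&` ~` U) `&` (B `&` U) = set0.
  by rewrite setIACA setICl setI0.
rewrite !setDE setCK measureU ?disj //; try exact: measurableI.
rewrite setUC measureU ?disj //; try exact: measurableI.
rewrite (measureDI m mP mS) (measureDI m mN mS) !setDE.
by rewrite addeACA [RHS]addeACA [in RHS](addeC (m (P `&` S))).
Qed.

Lemma ae_ge0_integral_abse_le (f : T -> \bar R) :
  measurable_fun [set: T] f -> \int[m]_x `|f x| < +oo ->
  \int[m]_x `|f x| <= \int[m]_x f x -> {ae m, forall x, 0 <= f x}.
Proof.
move=> mf fin le_abs; have mfn := measurable_funeneg mf.
have abs_split : \int[m]_x `|f x| = \int[m]_x f^\+ x + \int[m]_x f^\- x.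
  rewrite -ge0_integralD //; last exact: measurable_funepos.
  by apply: eq_integral => x _; rewrite -[LHS]/((abse \o f) x) fune_abse.
have ge0_neg : 0 <= \int[m]_x f^\- x by apply: integral_ge0.
have fin_pos : \int[m]_x f^\+ x \is a fin_num.
  rewrite ge0_fin_numE ?integral_ge0 //.
  by rewrite (le_lt_trans _ fin) // abs_split leeDl.
have neg0 : \int[m]_x `|f^\- x| = 0.
  under eq_integral do rewrite gee0_abs //.
  move: le_abs; rewrite abs_split [leRHS]integralE -(fineK fin_pos).
  move: ge0_neg; case: (\int[m]_x f^\- x) => [r||] //=.
  by rewrite -!EFinD !lee_fin => r0 le_r; congr EFin; lra.
have [+ _] := ae_eq_integral_abs m measurableT mfn; move=> /(_ neg0).
apply: filterS => x /(_ I) /=; rewrite funenegE => /max_idPr.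
by rewrite oppe_le0.
Qed.

End measure_integral_facts.

Section young.
Variable R : realType.

Lemma powR_prod (I : Type) (s : seq I) (P : pred I) (a : I -> R) (r : R) :
  (forall k, 0 <= a k) ->
  (\prod_(k <- s | P k) a k) `^ r = \prod_(k <- s | P k) a k `^ r.
Proof.
move=> a0; elim: s => [|k s IH]; first by rewrite !big_nil powR1.
by rewrite !big_cons; case: (P k) => //; rewrite powRM ?IH // prodr_ge0.
Qed.

(* Induction on n: split off a_0 and apply the two-factor inequality
   [conjugate_powR] with exponents p_0 and 1/W, where W = sum_(k > 0) 1/p_k;
   the induction hypothesis is used for the a_k^(1/W) with exponents W p_k. *)
Lemma young_prod n (a p : 'I_n -> R) :
  (forall k, 0 <= a k) -> (forall k, 0 < p k) -> \sum_k (p k)^-1 = 1 ->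
  \prod_k a k <= \sum_k a k `^ p k / p k.
Proof.
elim: n a p => [|n IH] a p a0 p0 hp.
  by move: hp; rewrite big_ord0 => /eqP; rewrite eq_sym oner_eq0.
rewrite big_ord_recl [leRHS]big_ord_recl; rewrite big_ord_recl in hp.
case: n IH a p a0 p0 hp => [|n] IH a p a0 p0 hp.
  move: hp; rewrite !big_ord0 !addr0 mulr1 => /(congr1 GRing.inv).
  by rewrite invrK invr1 => ->; rewrite powRr1 // divr1.
set W := \sum_(k < n.+1) (p (lift ord0 k))^-1 in hp.
set G := \prod_(k < n.+1) a (lift ord0 k).
have W0 : 0 < W.
  rewrite /W big_ord_recl ltr_pwDl ?invr_gt0 //.
  by rewrite sumr_ge0 // => k _; rewrite invr_ge0 ltW.
apply: le_trans.
  apply: (conjugate_powR (q := W^-1) (a0 ord0) _ (p0 ord0)).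
  - by rewrite prodr_ge0.
  - by rewrite invr_gt0.
  - by rewrite invrK.
rewrite lerD2l invrK.
have IHW := IH (fun k => a (lift ord0 k) `^ W^-1) (fun k => p (lift ord0 k) * W).
rewrite -powR_prod // -/G in IHW.
apply: (le_trans (ler_wpM2r (ltW W0) (IHW _ _ _))).
- by move=> k; exact: powR_ge0.
- by move=> k; rewrite mulr_gt0.
- by under eq_bigr do rewrite invfM; rewrite -mulr_suml mulfV ?gt_eqF.
rewrite mulr_suml; apply: ler_sum => k _.
by rewrite -powRrM mulrCA mulVf ?gt_eqF // mulr1 invfM mulrA mulfVK ?gt_eqF.
Qed.

End young.

Section detx_bounds.
Variables (R : realType) (d : nat).

Lemma measurable_detx : measurable_fun [set: d.-tuple (d.-tuple R)] (@detx R d).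
Proof.
apply: (eq_measurable_fun (fun x : d.-tuple (d.-tuple R) => \sum_(s : 'S_d)
    (-1 : R) ^+ s * \prod_k tnth (tnth x k) (s k))).
  move=> x _; rewrite /detx /determinant; apply: eq_bigr => s _.
  by congr (_ * _); apply: eq_bigr => k _; rewrite mxE.
apply: measurable_sum => s; apply: measurable_funM; first exact: measurable_cst.
apply: measurable_prod => k _.
exact: measurableT_comp (measurable_tnth _) (measurable_tnth _).
Qed.

Lemma measurable_negt : measurable_fun [set: d.-tuple R] (@negt R d).
Proof.
apply/measurable_fun_tnthP => k.
apply: (eq_measurable_fun (fun x : d.-tuple R => - tnth x k)).
  by move=> x _ /=; rewrite tnth_map.
by apply: measurable_funN; exact: measurable_tnth.
Qed.

Lemma measurable_powR_enorm (q : R) :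
  measurable_fun [set: d.-tuple R] (fun x => enorm x `^ q).
Proof.
apply: (eq_measurable_fun (fun x : d.-tuple R =>
    (\sum_(k < d) tnth x k ^+ 2) `^ 2^-1 `^ q)).
  by move=> x _; rewrite powR12_sqrt // sumr_ge0 // => k _; rewrite sqr_ge0.
apply: measurableT_comp (measurable_powR _) _.
apply: measurableT_comp (measurable_powR _) _.
by apply: measurable_sum => k; apply: measurable_funX; exact: measurable_tnth.
Qed.

Lemma abs_tnth_le_enorm (x : d.-tuple R) k : `|tnth x k| <= enorm x.
Proof.
rewrite -sqrtr_sqr ler_sqrt; last by rewrite sumr_ge0 // => l _; rewrite sqr_ge0.
by rewrite (bigD1 k) //= lerDl sumr_ge0 // => l _; rewrite sqr_ge0.
Qed.

Lemma abs_detx_le (x : d.-tuple (d.-tuple R)) :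
  `|detx x| <= d`!%:R * \prod_k enorm (tnth x k).
Proof.
rewrite /detx /determinant; apply: (le_trans (ler_norm_sum _ _ _)).
rewrite -card_Sn -sumr_const mulr_suml; apply: ler_sum => s _.
rewrite mul1r normrM normrX normrN1 expr1n mul1r normr_prod.
by apply: ler_prod => k _; rewrite normr_ge0 mxE abs_tnth_le_enorm.
Qed.

Lemma abs_detx_le_young (p : 'I_d -> R) (x : d.-tuple (d.-tuple R)) :
  (forall k, 0 < p k) -> \sum_k (p k)^-1 = 1 ->
  `|detx x| <= d`!%:R * \sum_k enorm (tnth x k) `^ p k / p k.
Proof.
move=> p0 hp; apply: (le_trans (abs_detx_le x)).
by rewrite ler_wpM2l // young_prod // => k; exact: sqrtr_ge0.
Qed.

End detx_bounds.

Section sign_flip.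
Variables (R : realType) (d : nat) (i j : 'I_d).
Local Notation T := (d.-tuple (d.-tuple R)).

(* For a fair sign e, rows i and j are each negated with probability 1/2
   whatever x is, and an odd number of them is negated iff detx x < 0. *)
Definition negated_row (e : bool) (x : T) (k : 'I_d) : bool :=
  if k == i then ~~ e else if k == j then (detx x < 0) == e else false.

Definition sign_flip (e : bool) (x : T) : T :=
  [tuple if negated_row e x k then negt (tnth x k) else tnth x k | k < d].

Lemma detx_sign_flip e x : i != j -> detx (sign_flip e x) = `|detx x|.
Proof.
move=> hij; rewrite /detx.
have -> : \matrix_(k, l) tnth (tnth (sign_flip e x) k) l =
    diag_mx (\row_k (-1) ^+ negated_row e x k) *m \matrix_(k, l) tnth (tnth x k) l.
  apply/matrixP => k l; rewrite mul_diag_mx !mxE tnth_mktuple.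
  by case: negated_row; rewrite ?tnth_map ?mulN1r ?mul1r.
rewrite det_mulmx det_diag (bigD1 i) // (bigD1 j) 1?eq_sym //= big1; last first.
  by move=> k /andP[ki kj]; rewrite mxE /negated_row (negbTE ki) (negbTE kj).
rewrite !mxE /negated_row eqxx eq_sym (negbTE hij) eqxx mulr1 -/(detx x).
case: e; case: (ltrP (detx x) 0) => D0 /=.
- by rewrite ltr0_norm // expr0 expr1 mul1r mulN1r.
- by rewrite ger0_norm // expr0 !mul1r.
- by rewrite ltr0_norm // expr0 expr1 mulr1 mulN1r.
- by rewrite ger0_norm // expr1 mulN1r opprK mul1r.
Qed.

Lemma measurable_negated_row e k :
  measurable_fun [set: T] (fun x => negated_row e x k).
Proof.
rewrite /negated_row; case: (k == i); first exact: measurable_cst.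
case: (k == j); last exact: measurable_cst.
have mdet0 : measurable_fun [set: T] (fun x => detx x < 0).
  exact: measurable_fun_ltr (@measurable_detx R d) (measurable_cst (0 : R)).
case: e; first by under eq_fun do rewrite eqb_id.
by under eq_fun do rewrite eqbF_neg; exact: measurable_neg.
Qed.

Lemma measurable_sign_flip e : measurable_fun [set: T] (sign_flip e).
Proof.
apply/measurable_fun_tnthP => k.
apply: (eq_measurable_fun (fun x : T =>
    if negated_row e x k then negt (tnth x k) else tnth x k)).
  by move=> x _ /=; rewrite tnth_mktuple.
apply: measurable_fun_ifT; first exact: measurable_negated_row.
  exact: measurableT_comp (@measurable_negt R d) (measurable_tnth _).
exact: measurable_tnth.
Qed.

HB.instance Definition _ e :=
  isMeasurableFun.Build _ _ _ _ (sign_flip e) (measurable_sign_flip e).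

Lemma preimage_sign_flip_tnth e k (A : set (d.-tuple R)) :
  let S := [set x | negated_row e x k] in
  sign_flip e @^-1` ((fun x : T => tnth x k) @^-1` A) =
  ((fun x : T => tnth x k) @^-1` A `\` S) `|`
  ((fun x : T => tnth x k) @^-1` (@negt R d @^-1` A) `&` S).
Proof.
move=> S; apply/seteqP; split=> x /=; rewrite tnth_mktuple.
  by rewrite /S /=; case: negated_row => Ax; [right|left].
by rewrite /S /=; case: negated_row => -[] [].
Qed.

End sign_flip.

Section flip_coupling.
Variables (R : realType) (d : nat) (mu : 'I_d -> probability (d.-tuple R) R).
Variables (i j : 'I_d) (gam : probability (d.-tuple (d.-tuple R)) R).
Hypotheses (hij : i != j) (hg : coupling mu gam).
Hypotheses (hsi : symmetric_measure (mu i)) (hsj : symmetric_measure (mu j)).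
Local Notation T := (d.-tuple (d.-tuple R)).

Definition flip_coupling := mid_prob
  (distribution gam (sign_flip i j true)) (distribution gam (sign_flip i j false)).

Lemma flip_couplingE A : flip_coupling A = ((2^-1 : R)%:E *
  (gam (sign_flip i j true @^-1` A) + gam (sign_flip i j false @^-1` A)))%E.
Proof. exact: mid_probE. Qed.

Lemma coupling_flip_coupling : coupling mu flip_coupling.
Proof.
move=> k A mA.
rewrite -[LHS]/(flip_coupling _) flip_couplingE !preimage_sign_flip_tnth.
have mtnth B : measurable B -> measurable ((fun x : T => tnth x k) @^-1` B).
  by move=> mB; rewrite -[X in measurable X]setTI; exact: measurable_tnth.
have mnegtA : measurable (@negt R d @^-1` A).
  by rewrite -[X in measurable X]setTI; exact: measurable_negt.
have [kij|kij] := boolP ((k == i) || (k == j)); last first.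
  have unflipped e : [set x : T | negated_row i j e x k] = set0.
    apply/seteqP; split=> x //=; rewrite /negated_row.
    by case/norP: kij => /negbTE-> /negbTE->.
  by rewrite !unflipped setD0 setI0 setU0 hg // halfeDD.
have hsk : symmetric_measure (mu k) by case/orP: kij => /eqP->.
have -> : [set x : T | negated_row i j false x k] =
          ~` [set x : T | negated_row i j true x k].
  have {kij} [->|->] : k = i \/ k = j by case/orP: kij => /eqP; [left|right].
    by apply/seteqP; split=> x; rewrite /= /negated_row eqxx.
  apply/seteqP; split=> x; rewrite /= /negated_row eq_sym (negbTE hij) eqxx;
    by case: (detx x < 0).
rewrite measure_select_setC; [|exact: mtnth|exact: mtnth|]; last first.
  by rewrite -[X in measurable X]setTI; exact: measurable_negated_row.
(* [measure_select_setC] sees [gam] as a measure, [hg] as a probability. *)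
have hgk B : measurable B ->
    (gam : {measure set T -> \bar R}) ((fun x => tnth x k) @^-1` B) = mu k B.
  exact: hg.
by rewrite !hgk // hsk // halfeDD.
Qed.

Lemma integral_flip_coupling_detx :
  (\int[flip_coupling]_x (detx x)%:E = \int[gam]_x `|detx x|%:E)%E.
Proof.
set f := fun x : T => (detx x)%:E.
have mf : measurable_fun [set: T] f.
  by apply/measurable_EFinP; exact: measurable_detx.
have mfp := measurable_funepos mf; have mfn := measurable_funeneg mf.
rewrite integralE /flip_coupling !ge0_integral_mid_prob //.
rewrite !ge0_integral_distribution //.
have pos e : (\int[gam]_x (f^\+ \o sign_flip i j e) x = \int[gam]_x `|detx x|%:E)%E.
  by apply: eq_integral => x _; rewrite /= funeposE /f detx_sign_flip // max_l.
have neg e : (\int[gam]_x (f^\- \o sign_flip i j e) x = 0)%E.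
  rewrite -[RHS](integral0 gam setT); apply: eq_integral => x _.
  by rewrite /= funenegE /f detx_sign_flip // max_r // lee_fin oppr_le0.
rewrite !pos !neg adde0 mule0 sube0 halfeDD //.
by apply: integral_ge0 => x _; rewrite lee_fin.
Qed.

End flip_coupling.

Section coupling_integrals.
Local Open Scope ereal_scope.
Variables (R : realType) (d : nat) (mu : 'I_d -> probability (d.-tuple R) R).
Variable gam : probability (d.-tuple (d.-tuple R)) R.
Hypothesis hg : coupling mu gam.

Lemma ge0_integral_coupling k (g : d.-tuple R -> \bar R) :
  measurable_fun [set: d.-tuple R] g -> (forall y, 0 <= g y) ->
  \int[gam]_x g (tnth x k) = \int[mu k]_y g y.
Proof.
move=> mg g0.
have := ge0_integral_pushforward (measurable_tnth k) gam measurableT mg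
  (fun y _ => g0 y).
rewrite preimage_setT => <-.
(* the first goal is the measurability proof stored in the pushforward *)
by apply: eq_measure_integral => [|mk A mA _]; [exact: measurable_tnth|exact: hg].
Qed.

Lemma integral_abs_detx_lt_pinfty (p : 'I_d -> R) :
  (forall k, 0 < p k)%R -> (\sum_k (p k)^-1 = 1)%R ->
  \sum_k \int[mu k]_y (enorm y `^ p k / p k)%:E < +oo ->
  \int[gam]_x `|detx x|%:E < +oo.
Proof.
move=> p0 hp hmom.
pose g k (y : d.-tuple R) := (enorm y `^ p k / p k)%R.
have g0 k y : (0 <= g k y)%R by rewrite divr_ge0 ?powR_ge0 ?ltW.
have mg k : measurable_fun [set: d.-tuple R] (g k).
  by apply: measurable_funM; [exact: measurable_powR_enorm|exact: measurable_cst].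
have mgk k : measurable_fun [set: d.-tuple (d.-tuple R)] (fun x => g k (tnth x k)).
  exact: measurableT_comp (mg k) (measurable_tnth k).
apply: (@le_lt_trans _ _ (\int[gam]_x (d`!%:R * \sum_k g k (tnth x k))%:E)).
  apply: ge0_le_integral => //.
  - apply/measurable_EFinP; apply: measurableT_comp; first exact: normr_measurable.
    exact: measurable_detx.
  - apply/measurable_EFinP; apply: measurable_funM; first exact: measurable_cst.
    exact: measurable_sum.
  - by move=> x _; rewrite lee_fin abs_detx_le_young.
under eq_integral do rewrite EFinM.
rewrite ge0_integralZl //; last 2 first.
- by apply/measurable_EFinP; exact: measurable_sum.
- by move=> x _; rewrite lee_fin sumr_ge0.
apply: lte_mul_pinfty => //.
under eq_integral do rewrite -sumEFin.
rewrite ge0_integral_sum //; last 2 first.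
- by move=> k; apply/measurable_EFinP.
- by move=> k x _; rewrite lee_fin.
under eq_bigr => k _.
  rewrite (ge0_integral_coupling k (g := fun y => (g k y)%:E)); last 2 first.
  - by apply/measurable_EFinP.
  - by move=> y; rewrite lee_fin.
  over.
exact: hmom.
Qed.

End coupling_integrals.

Unset Implicit Arguments.

Theorem proposition5p1 (R : realType) (d : nat)
    (mu : 'I_d -> probability (d.-tuple R) R)
    (p : 'I_d -> R)
    (hp1 : forall i, 1 < p i)
    (hpsum : \sum_(i < d) (p i)^-1 = 1)
    (hmom : (\sum_(i < d) \int[mu i]_x ((enorm x `^ p i) / p i)%:E < +oo)%E)
    (i j : 'I_d) (hij : i != j)
    (hsi : symmetric_measure (mu i)) (hsj : symmetric_measure (mu j))
    (gbar : probability (d.-tuple (d.-tuple R)) R)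
    (hgbar : coupling mu gbar)
    (hmax : forall gamma : probability (d.-tuple (d.-tuple R)) R,
        coupling mu gamma ->
        (\int[gamma]_x (detx x)%:E <= \int[gbar]_x (detx x)%:E)%E) :
  {ae gbar, forall x, 0 <= detx x} /\
  (forall gamma : probability (d.-tuple (d.-tuple R)) R,
      coupling mu gamma ->
      (\int[gamma]_x `|detx x|%:E <= \int[gbar]_x `|detx x|%:E)%E).
Proof.
have mdet : measurable_fun [set: d.-tuple (d.-tuple R)] (fun x => (detx x)%:E).
  by apply/measurable_EFinP; exact: measurable_detx.
have abs_le_gbar gamma : coupling mu gamma ->
    (\int[gamma]_x `|detx x|%:E <= \int[gbar]_x (detx x)%:E)%E.
  move=> hgam; rewrite -(integral_flip_coupling_detx gamma hij).
  by apply: hmax; exact: coupling_flip_coupling.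
split; last first.
  move=> gamma hgam; apply: (le_trans (abs_le_gbar _ hgam)).
  by apply: (le_trans (lee_abs _)); exact: le_abse_integral.
have p0 k : 0 < p k by exact: lt_trans ltr01 (hp1 k).
have := ae_ge0_integral_abse_le mdet
  (integral_abs_detx_lt_pinfty hgbar p0 hpsum hmom) (abs_le_gbar _ hgbar).
by apply: filterS => x; rewrite lee_fin.
Qed.
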